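(* If $G$ is a $2$-connected graph of order $n$ with minimum degree $\delta(G)\ge n/3$, then $G$ is cummerbund covered.
   Context: All graphs are finite and simple. A cummerbund of a graph is a longest cycle in it. A graph is cummerbund covered if every vertex lies in some cummerbund. *)

From mathcomp Require Import all_boot.
Set Implicit Arguments.
Unset Strict Implicit.
Unset Printing Implicit Defensive.

Definition simple_graph (T : finType) (e : rel T) : Prop :=
  symmetric e /\ irreflexive e.

Definition is_cycle (T : finType) (e : rel T) (c : seq T) : Prop :=
  [/\ 3 <= size c, uniq c & cycle e c].

Definition cummerbund (T : finType) (e : rel T) (c : seq T) : Prop :=
  is_cycle e c /\ (forall d, is_cycle e d -> size d <= size c).

Definition cummerbund_covered (T : finType) (e : rel T) : Prop :=
  forall v : T, exists c, cummerbund e c /\ v \in c.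

Definition connected_in (T : finType) (e : rel T) (S : {set T}) : Prop :=
  forall x y, x \in S -> y \in S ->
    connect [rel u v | [&& e u v, u \in S & v \in S]] x y.

Definition two_connected (T : finType) (e : rel T) : Prop :=
  [/\ 3 <= #|T|, connected_in e setT &
      forall v : T, connected_in e (setT :\ v)].

Definition degree (T : finType) (e : rel T) (v : T) : nat := #|[set u | e v u]|.

(* Let C be a longest cycle missing v and H the component of G - C containing v.
   If the inner vertices of an arc X of C have no neighbour in H and the ends of X
   are joined through H by a path with as many vertices as X, swapping X for that
   path gives another longest cycle, which either passes through v or leaves v in a
   strictly smaller component; so it suffices that such a swap always exists.
   Otherwise every such H-path P is shorter than its arc X, and splitting X at its
   attachments (vertices adjacent to H) gives |X| >= |P| + 3 att(X) + 1. Take an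
   H-path q whose ends see distinct vertices a, b of C and with more vertices than
   the H-degree of some z in H; it comes from a maximal path of H by Posa rotations
   and 2-connectedness. Applying the bound to both arcs of C between a and b yields
   |C| >= 2|q| + 3|A| - 2, where A is the set of attachments, whereas
   n >= |C| + |q| and n <= 3 deg z <= 3 (|q| - 1 + |A|). *)

From mathcomp Require Import all_boot zify.
From Stdlib Require Import Classical.

Set Implicit Arguments.
Unset Strict Implicit.
Unset Printing Implicit Defensive.

Lemma exists_maximal (X : Type) (P : X -> Prop) (f : X -> nat) (N : nat) :
  (exists x, P x) -> (forall x, P x -> f x <= N) ->
  exists x, P x /\ forall y, P y -> f y <= f x.
Proof.
move=> [x Px] bnd.
suff H k x' : P x' -> N - f x' <= k ->
  exists x, P x /\ forall y, P y -> f y <= f x by exact: (H _ x Px (leqnn _)).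
elim: k x' => [|k IH] x' Px' Hk.
  by exists x'; split=> // y Py; have := bnd _ Py; lia.
case: (classic (exists y, P y /\ f x' < f y)) => [[y [Py lt]]|no].
  by apply: (IH y Py); have := bnd _ Py; lia.
exists x'; split=> // y Py; case: (leqP (f y) (f x')) => // lt.
by exfalso; apply: no; exists y.
Qed.

Lemma split_mem (T : eqType) (x : T) s : x \in s -> exists s1 s2, s = s1 ++ x :: s2.
Proof. by case/splitPr => s1 s2; exists s1, s2. Qed.

Lemma split_first (T : Type) (P : pred T) s : has P s ->
  exists s1 x s2, [/\ s = s1 ++ x :: s2, P x & ~~ has P s1].
Proof. by case/split_find=> x s1 s2 Px nP; exists s1, x, s2; rewrite cat_rcons. Qed.

Lemma split_last (T : Type) (P : pred T) s : has P s ->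
  exists s1 x s2, [/\ s = s1 ++ x :: s2, P x & ~~ has P s2].
Proof.
rewrite -has_rev => /split_first[s1 [x [s2 [Es Px nP]]]].
exists (rev s2), x, (rev s1); rewrite has_rev; split=> //.
by rewrite -[s]revK Es rev_cat rev_cons cat_rcons.
Qed.

Lemma head_rev (T : Type) (x : T) s : head x (rev s) = last x s.
Proof. by case/lastP: s => // s y; rewrite rev_rcons last_rcons. Qed.

Lemma last_rev (T : Type) (x : T) s : last x (rev s) = head x s.
Proof. by case: s => // y s; rewrite rev_cons last_rcons. Qed.

Lemma head_def (T : eqType) (x y : T) s : s != [::] -> head x s = head y s.
Proof. by case: s. Qed.

Lemma last_def (T : eqType) (x y : T) s : s != [::] -> last x s = last y s.
Proof. by case: s. Qed.

Lemma count_lt_size (T : eqType) (P : pred T) s x : x \in s -> ~~ P x -> count P s < size s.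
Proof.
move=> xs Px; rewrite -(count_predC P) -[X in X < _]addn0 ltn_add2l -has_count.
by apply/hasP; exists x.
Qed.

Definition is_rot (T : Type) (C s : seq T) := exists k, rot k C = s.

Lemma is_rot_cat (T : Type) (C s1 s2 : seq T) : is_rot C (s1 ++ s2) -> is_rot C (s2 ++ s1).
Proof.
case=> k Ek; have sC : size C = size s1 + size s2 by rewrite -(size_rot k C) Ek size_cat.
rewrite -rot_size_cat -Ek.
case: (leqP k (size C)) => kC; last by rewrite (rot_oversize (ltnW kC)); exists (size s1).
rewrite rot_add_mod //; first by eexists.
by rewrite sC leq_addr.
Qed.

Lemma is_rot_perm (T : eqType) (C s : seq T) : is_rot C s -> perm_eq s C.
Proof. by case=> k <-; rewrite perm_rot. Qed.

Lemma is_rot_cycle (T : Type) (e : rel T) (C s : seq T) : is_rot C s -> cycle e s = cycle e C.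
Proof. by case=> k <-; rewrite rot_cycle. Qed.

Section SimplePaths.
Variables (T : eqType) (e : rel T).
Hypotheses (esym : symmetric e) (eirr : irreflexive e).

Lemma sorted_rev s : sorted e (rev s) = sorted e s.
Proof. by rewrite rev_sorted; apply: eq_sorted => // x y; rewrite esym. Qed.

Lemma sorted_cat_edge s1 x y s2 :
  sorted e (rcons s1 x) -> e x y -> sorted e (y :: s2) -> sorted e (s1 ++ x :: y :: s2).
Proof.
move=> s1x exy ys2; rewrite -cat_rcons; case: s1 s1x => [|z s1] /=; first by rewrite exy.
by rewrite cat_path last_rcons => ->; rewrite /= exy.
Qed.

Lemma path_last_neighbour x p : p != [::] -> path e x p -> has (e (last x p)) (x :: p).
Proof.
case/lastP: p => // p y _; rewrite rcons_path last_rcons => /andP[_ eyl].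
by apply/hasP; exists (last x p); [rewrite -rcons_cons mem_rcons inE mem_last orbT | rewrite esym].
Qed.

Definition upath_in (U : {pred T}) p := [/\ sorted e p, uniq p & {subset p <= U}].

Lemma upath_in_sub (U U' : {pred T}) p :
  {subset U <= U'} -> upath_in U p -> upath_in U' p.
Proof. by move=> sUU' [ps pu pU]; split=> // x /pU /sUU'. Qed.

Lemma upath_in_rev U p : upath_in U p -> upath_in U (rev p).
Proof. by case=> ps pu pU; split; rewrite ?sorted_rev ?rev_uniq // => x; rewrite mem_rev => /pU. Qed.

Lemma upath_in_infix U p p' : infix p' p -> upath_in U p -> upath_in U p'.
Proof.
move=> ip [ps pu pU]; split; [exact: infix_sorted ps | exact: infix_uniq pu |].
by move=> x /(mem_infix ip) /pU.
Qed.

Lemma upath_in_cat U x s1 s2 :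
  upath_in U (x :: s1) -> upath_in U s2 -> path e (last x s1) s2 ->
  ~~ has (mem (x :: s1)) s2 -> upath_in U (x :: s1 ++ s2).
Proof.
move=> [s1s s1u s1U] [_ s2u s2U] ps2 dis; split.
- by move: s1s; rewrite /= cat_path => ->.
- by rewrite -cat_cons cat_uniq s1u s2u dis.
- by move=> w; rewrite -cat_cons mem_cat => /orP[/s1U|/s2U].
Qed.

Lemma path_bridge (X Y : pred T) (XY : forall z, X z -> ~~ Y z) x p :
  X x -> path e x p -> Y (last x p) ->
  exists x' W y, [/\ X x', Y y, path e x' (rcons W y),
    all [pred z | ~~ X z && ~~ Y z] W & subseq (x' :: rcons W y) (x :: p)].
Proof.
suff gen W : X x -> all [pred z | ~~ X z && ~~ Y z] W -> path e x (W ++ p) ->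
    Y (last x (W ++ p)) -> exists x' W' y, [/\ X x', Y y, path e x' (rcons W' y),
    all [pred z | ~~ X z && ~~ Y z] W' & subseq (x' :: rcons W' y) (x :: W ++ p)].
  by move=> Xx px Yl; exact: (gen [::]).
elim: p x W => [|z p IH] x W Xx HW.
  rewrite cats0 => _; case/lastP: W HW => [_ /=|W z]; first by rewrite (negbTE (XY _ Xx)).
  by rewrite last_rcons all_rcons => /andP[/andP[_ /negbTE ->]].
rewrite cat_path /= => /and3P[pW exz pz] Yl.
case Yz: (Y z).
  exists x, W, z; split=> //; first by rewrite rcons_path pW.
  by rewrite /= eqxx -cats1 subseq_cat2l -[z :: p]cat1s prefix_subseq.
case Xz: (X z).
  rewrite last_cat /= in Yl.
  have [x' [W' [y [Xx' Yy pW' HW' sub]]]] := IH z [::] Xz erefl pz Yl.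
  exists x', W', y; split=> //.
  exact: subseq_trans sub (suffix_subseq (x :: W) (z :: p)).
have HW' : all [pred z | ~~ X z && ~~ Y z] (rcons W z) by rewrite all_rcons /= Xz Yz.
have := IH x (rcons W z) Xx HW'; rewrite cat_rcons; apply=> //.
by rewrite cat_path pW /= exz.
Qed.

Lemma rotation_path U L x R : upath_in U (L ++ x :: R) -> exists q,
  [/\ upath_in U q, head x q = (if has (e (last x R)) L then head x L else last x R),
    last x q = x & count (e (last x R)) (L ++ x :: R) < size q].
Proof.
set y := last x R; case=> Ps Pu PU.
have cR : count (e y) (x :: R) < size (x :: R) by apply: (count_lt_size (x := y)); rewrite ?mem_last ?eirr.
case: ifP => hL; last first.
  exists (rev (x :: R)); split.
  - by apply/upath_in_rev/(upath_in_infix (suffix_infix L _)).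
  - by rewrite head_rev.
  - by rewrite last_rev.
  - rewrite count_cat size_rev.
    by have -> : count (e y) L = 0 by apply/eqP; rewrite eqn0Ngt -has_count hL.
have [L1 [z [L2 [EL eyz nL2]]]] := split_last hL.
have sub : subseq (L1 ++ z :: x :: R) (L ++ x :: R).
  by rewrite EL -catA subseq_cat2l /= eqxx suffix_subseq.
have pe : perm_eq (L1 ++ z :: rev (x :: R)) (L1 ++ z :: x :: R).
  by rewrite perm_cat2l perm_cons perm_rev.
exists (L1 ++ z :: rev (x :: R)); split.
- split.
  + rewrite (lastI x R) rev_rcons; apply: sorted_cat_edge; last 1 first.
    * by rewrite -rev_rcons -lastI sorted_rev //; move: Ps => /cat_sorted2[].
    * by move: Ps; rewrite EL -catA sorted_cat_cons => /andP[].
    * by rewrite esym.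
  + by rewrite (perm_uniq pe) (subseq_uniq sub).
  + by move=> w; rewrite (perm_mem pe) => /(mem_subseq sub)/PU.
- by rewrite EL; case: (L1).
- by rewrite last_cat /= rev_cons last_rcons.
- move: cR; rewrite EL -catA !count_cat /= eyz !size_cat /= size_rev.
  have -> : count (e y) L2 = 0 by apply/eqP; rewrite eqn0Ngt -has_count.
  by have := count_size (e y) L1; rewrite /=; lia.
Qed.

End SimplePaths.

Section Graphs.
Variables (T : finType) (e : rel T).
Hypotheses (esym : symmetric e) (eirr : irreflexive e).

Local Notation upath_in := (upath_in e).

Definition restr (S : {pred T}) : rel T := [rel u v | [&& e u v, u \in S & v \in S]].

Lemma path_restr (S : {pred T}) x p : path (restr S) x p -> path e x p /\ {subset p <= S}.
Proof.
elim: p x => [|y p IH] x //= /andP[/and3P[-> _ Sy] /IH[-> pS]].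
by split=> // w; rewrite inE => /orP[/eqP->|/pS].
Qed.

Lemma upath_in_size U p : upath_in U p -> size p <= #|T|.
Proof. by case=> _ /card_uniqP <- _; exact: max_card. Qed.

Lemma exists_notin (A : {set T}) : #|A| < #|T| -> exists w, w \notin A.
Proof.
move=> ltAT; apply/existsP; rewrite -negb_forall; apply: contraTN ltAT => /forallP AT.
by rewrite -leqNgt; apply/subset_leq_card/subsetP => w _; exact: AT.
Qed.

Lemma connected_in_step (S : {set T}) x y : connected_in e S -> x \in S -> y \in S ->
  x != y -> exists2 z, e x z & z \in S.
Proof.
move=> cS xS yS xy; have /connectP[[|z p] /= pS yl] := cS x y xS yS.
  by rewrite yl eqxx in xy.
by case/andP: pS => /and3P[exz _ zS] _; exists z.
Qed.

Lemma connected_in_bridge (S : {set T}) (X Y : pred T) x y :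
  connected_in e S -> (forall z, X z -> ~~ Y z) ->
  x \in S -> X x -> y \in S -> Y y ->
  exists x' W y', [/\ X x', Y y', all [pred z | ~~ X z && ~~ Y z] W &
    upath_in S (x' :: rcons W y')].
Proof.
move=> cS XY xS Xx yS Yy; have /connectP[p pS yl] := cS x y xS yS.
rewrite {}yl in Yy.
move: Yy; case: (shortenP pS) => p' /path_restr[p'e p'S] p'u _ Yy.
have [x' [W [y' [Xx' Yy' pW WXY sub]]]] := path_bridge XY Xx p'e Yy.
exists x', W, y'; split=> //; split=> //; first exact: subseq_uniq sub p'u.
by move=> w /(mem_subseq sub); rewrite inE => /orP[/eqP->|/p'S].
Qed.

Lemma upath_in_via (S : {set T}) P x : connected_in e S -> P != [::] ->
  upath_in S P -> x \in S -> exists P1 P2,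
  [/\ upath_in S P1, upath_in S P2, head x P1 = head x P, last x P2 = last x P &
      [/\ P1 != [::], P2 != [::], last x P1 = x, head x P2 = x & size P < size P1 + size P2]].
Proof.
move=> cS Pn PS xS; case: (boolP (x \in P)) => [xP|xP].
  have [A1 [A2 EP]] := split_mem xP.
  exists (rcons A1 x), (x :: A2); rewrite EP in PS *; split.
  - by apply: upath_in_infix PS; rewrite -cat_rcons prefix_infix.
  - by apply: upath_in_infix PS; rewrite suffix_infix.
  - by case: (A1).
  - by rewrite last_cat.
  split=> //; first by case: (A1).
  - by rewrite last_rcons.
  - by rewrite size_cat size_rcons /=; clear; lia.
have [p0 [P' EP]] : exists p0 P', P = p0 :: P' by case: (P) Pn => // p0 P' _; exists p0, P'.
have p0S : p0 \in S by case: PS => _ _; apply; rewrite EP mem_head.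
have XY z : z \in pred1 x -> ~~ (z \in P) by move/eqP->.
have p0P : p0 \in P by rewrite EP mem_head.
have [x' [W [y [/eqP Ex' yP WXY xWy]]]] :=
  @connected_in_bridge _ (pred1 x) (mem P) x p0 cS XY xS (eqxx x) p0S p0P.
subst x'.
have xW : upath_in S (x :: W).
  by apply: upath_in_infix xWy; rewrite -cats1 -cat_cons prefix_infix.
have eWy : e (last x W) y by case: xWy => /= + _ _; rewrite rcons_path => /andP[].
have xWP z : z \in x :: W -> z \notin P.
  by rewrite inE => /orP[/eqP-> //|zW]; move/allP/(_ z zW): WXY => /andP[].
have link t : upath_in S (y :: t) -> {subset y :: t <= P} -> upath_in S (x :: W ++ y :: t).
  move=> yt ytP; have [yts _ _] := yt.
  apply: upath_in_cat xW yt _ _; first by rewrite /= eWy.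
  by apply/hasP=> -[z /ytP zP /xWP]; rewrite zP.
have [A1 [A2 EP']] := split_mem yP.
exists (rev (x :: W ++ y :: rev A1)), (x :: W ++ y :: A2); split.
- apply/(upath_in_rev esym)/link; rewrite -rev_rcons.
    by apply/(upath_in_rev esym)/(upath_in_infix _ PS); rewrite EP' -cat_rcons prefix_infix.
  by move=> z; rewrite mem_rev EP' -cat_rcons mem_cat => ->.
- apply: link; first by apply: upath_in_infix PS; rewrite EP' suffix_infix.
  by move=> z; rewrite EP' mem_cat => ->; rewrite orbT.
- by rewrite head_rev /= last_cat /= last_rev EP'; case: (A1).
- by rewrite EP' /= !last_cat.
split=> //.
- by rewrite -size_eq0 size_rev.
- by rewrite last_rev.
- by rewrite EP' size_rev /= !size_cat /= size_rev; clear; lia.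
Qed.

Lemma maximal_path (U : {pred T}) x : x \in U ->
  exists p, upath_in U (x :: p) /\ {in U, forall w, e (last x p) w -> w \in x :: p}.
Proof.
move=> xU; have xpath : upath_in U [:: x] by split=> // w; rewrite inE => /eqP->.
have [p [pU pmax]] := @exists_maximal _ (fun p => upath_in U (x :: p))
  size #|T| (ex_intro _ [::] xpath) (fun p pU => ltnW (upath_in_size pU)).
exists p; split=> // w wU ew; apply/negPn/negP => wp.
have : upath_in U (x :: rcons p w).
  case: pU => /= ps pu pU; split; first by rewrite /= rcons_path ps ew.
    by rewrite -rcons_cons rcons_uniq wp.
  by move=> z; rewrite -rcons_cons mem_rcons inE => /orP[/eqP->|/pU].
by move/pmax; rewrite size_rcons ltnn.
Qed.

Section Component.
Variables (C : seq T) (v : T).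
Hypothesis vC : v \notin C.

Definition comp_off : {set T} := [set x | connect (restr [pred z | z \notin C]) v x].

Local Notation H := comp_off.

Lemma comp_off_v : v \in H.
Proof. by rewrite inE connect0. Qed.

Lemma comp_off_notC x : x \in H -> x \notin C.
Proof.
rewrite inE => /connectP[p /path_restr[_ pC] ->].
by case/lastP: p pC => // p y pC; rewrite last_rcons; apply: pC; rewrite mem_rcons mem_head.
Qed.

Lemma comp_off_closed x y : x \in H -> e x y -> y \notin C -> y \in H.
Proof.
move=> xH exy yC; have xC := comp_off_notC xH; move: xH; rewrite !inE => xH.
by apply: connect_trans xH (connect1 _); rewrite /restr /= exy inE xC.
Qed.

Lemma path_in_comp_off x p : x \in H -> path e x p -> all [pred z | z \notin C] p ->
  {subset p <= H}.
Proof.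
elim: p x => [|y p IH] x //= xH /andP[exy py] /andP[yC pC] w.
have yH := comp_off_closed xH exy yC.
by rewrite inE => /orP[/eqP->|/(IH y yH py pC)].
Qed.

Lemma connected_in_comp_off : connected_in e H.
Proof.
have rsym : connect_sym (restr [pred z | z \notin C]).
  apply: sym_connect_sym => a b; rewrite /restr /= esym.
  by case: (e b a) (a \in _) (b \in _) => [] [] [].
move=> x y xH yH; have := xH; have := yH; rewrite !inE => vy vx.
have /connectP[p px ->] := connect_trans (etrans (rsym _ _) vx) vy.
apply/connectP; exists p => //; elim: p x xH px {vx} => //= z p IH x xH /andP[/and3P[exz _ zC] pz].
have zH := comp_off_closed xH exz zC.
by rewrite exz xH zH IH.
Qed.

End Component.

Hypothesis tc : two_connected e.

Lemma exists_two_neighbours x : exists y z, [/\ e x y, e x z & y != z].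
Proof.
case: tc => T3 cT cTv.
have [w] : exists w, w \notin [set x] by apply: exists_notin; rewrite cards1; lia.
rewrite in_set1 eq_sym => xw.
have [y exy _] := connected_in_step cT (in_setT x) (in_setT w) xw.
have [w'] : exists w', w' \notin [set x; y].
  by apply: exists_notin; rewrite cards2; case: (x != y); lia.
rewrite !inE negb_or eq_sym => /andP[xw' w'y].
have xS : x \in setT :\ y by rewrite !inE andbT; apply: contraTneq exy => ->; rewrite eirr.
have w'S : w' \in setT :\ y by rewrite !inE w'y.
have [z exz] := connected_in_step (cTv y) xS w'S xw'.
by rewrite !inE andbT => zy; exists y, z; rewrite eq_sym.
Qed.

Lemma exists_cycle : exists c, is_cycle e c.
Proof.
case: tc => T3 _ _.
have [x0 _] : exists x0, x0 \in T by apply/card_gt0P; exact: ltn_trans T3.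
have [p [[ps pu _] pmax]] := maximal_path (in_setT x0).
set y := last x0 p in pmax.
have [y1 [y2 [ey1 ey2 y12]]] := exists_two_neighbours y.
have [|L [r [R [Ep eyr nL]]]] := @split_first _ (e y) (x0 :: p).
  by apply/hasP; exists y1 => //; apply: pmax.
have yR : y = last r R by rewrite /y -(last_cons x0) Ep last_cat.
have inR w : e y w -> w \in r :: R.
  move=> eyw; have := pmax w (in_setT w) eyw; rewrite Ep mem_cat => /orP[wL|//].
  by case/hasP: nL; exists w.
exists (r :: R); split.
- have ny w : e y w -> y != w by apply: contraTneq => <-; rewrite eirr.
  have : uniq [:: y; y1; y2] by rewrite /= !inE negb_or ny // ny // y12.
  move/uniq_leq_size => /(_ (r :: R)) /=; apply=> w /[!inE] /or3P[] /eqP->.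
  - by rewrite yR; exact: mem_last.
  - exact: inR.
  - exact: inR.
- by move: pu; rewrite Ep cat_uniq => /and3P[].
- rewrite /cycle rcons_path -yR eyr andbT.
  by move: ps; rewrite Ep => /cat_sorted2[].
Qed.

Lemma exists_cummerbund : exists C, cummerbund e C.
Proof.
have [c0 c0c] := exists_cycle.
have bnd c : is_cycle e c -> size c <= #|T| by case=> _ /card_uniqP <- _; exact: max_card.
have [C [CC Cmax]] := exists_maximal (ex_intro _ c0 c0c) bnd.
by exists C.
Qed.

Section Ears.
Variables (C : seq T) (v : T).
Hypotheses (vC : v \notin C) (C2 : 1 < #|C|).

Local Notation H := (comp_off C v).

Definition ear a b q := [/\ a \in C, b \in C, a != b, q != [::] &
  [/\ upath_in H q, e a (head a q) & e (last a q) b]].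

Definition long_paths a d (U : {pred T}) := {in U, forall x, exists q,
  [/\ upath_in U q, e a (head a q), last a q = x & d < size q]}.

Lemma other_in_C a : exists2 c, c \in C & c != a.
Proof.
apply/hasP; apply: contraTT C2 => /hasPn Ca; rewrite -leqNgt.
apply: leq_trans (card_size [:: a]); apply/subset_leq_card/subsetP => c /Ca.
by rewrite negbK inE.
Qed.

Lemma exists_attachment : exists2 u, u \in H & exists2 a, a \in C & e u a.
Proof.
have [c cC _] := other_in_C v; case: tc => _ cT _.
have HC z : z \in H -> z \notin C := @comp_off_notC C v vC z.
have [u [W [a [/= uH /= aC WHC [+ _ _]]]]] := @connected_in_bridge _
  [pred z | z \in H] [pred z | z \in C] v c cT HC (in_setT v) (comp_off_v C v) (in_setT c) cC.
case: W WHC => [_ /andP[eua _]|w W /= /andP[/andP[wH wC] _] /andP[euw _]].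
  by exists u => //; exists a.
by rewrite (comp_off_closed vC uH euw wC) in wH.
Qed.

Lemma ear_of_long_paths a d U : a \in C -> {subset U <= H} -> (exists x, x \in U) ->
  long_paths a d U -> exists b q, ear a b q /\ d < size q.
Proof.
move=> aC UH [x xU] lpU; case: tc => _ _ cTv.
have [c cC ca] := other_in_C a.
have XY z : z \in U -> ~~ ((z \in C) && (z != a)).
  by move=> /UH /(comp_off_notC vC) /negbTE ->.
have xS : x \in setT :\ a.
  by rewrite !inE andbT; apply: contraNneq (comp_off_notC vC (UH _ xU)) => ->.
have cS : c \in setT :\ a by rewrite !inE ca.
have [u [W [g [/= uU /= /andP[gC ga] WXY [uWs uWu uWS]]]]] :=
  @connected_in_bridge _ [pred z | z \in U] [pred z | (z \in C) && (z != a)]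
    x c (cTv a) XY xS xU cS (introT andP (conj cC ca)).
move: uWs => /= /[!rcons_path] /andP[uW eWg].
have WC : all [pred z | z \notin C] W.
  apply/allP=> w wW; move/allP/(_ w wW): WXY => /andP[_].
  have := uWS w; rewrite !inE mem_rcons inE wW !orbT andbT => /(_ isT) ->.
  by rewrite andbT.
have WH := path_in_comp_off vC (UH _ uU) uW WC.
have [[|q0 q] [qU eaq /= lq dq]] := lpU u uU; first by [].
exists g, (q0 :: q ++ W); split; last by rewrite /= size_cat -addSn ltn_addr.
split=> //; first by rewrite eq_sym.
split=> //; last by rewrite /= last_cat lq.
apply: upath_in_cat; first exact: upath_in_sub qU.
- split; [exact: path_sorted uW | |by []].
  by move: uWu; rewrite /= rcons_uniq => /and3P[].
- by rewrite lq.
- apply/hasPn=> w wW; move/allP/(_ w wW): WXY => /andP[wU _].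
  by apply: contra wU; case: qU => _ _; apply.
Qed.

Lemma long_paths_blob c d (S : seq T) U (qu W : seq T) :
  S != [::] -> sorted e (S ++ qu ++ W) -> uniq (S ++ qu ++ W) ->
  {subset qu <= U} -> d < (size qu).+1 ->
  e c (head c S) -> e (last c (S ++ qu ++ W)) c ->
  {in S, forall x, x \in U -> x = last c S} ->
  {in U, forall x, x != last c S -> exists q,
    [/\ upath_in U q, head x q = last c S, last x q = x & d < size q]} ->
  long_paths c d [pred z | [|| z \in S, z \in U | z \in W]].
Proof.
set B := [pred z | _] => Sn Ms Mu quU dqu ecS eMc SU lpU.
have MB : upath_in B (S ++ qu ++ W).
  split=> // w; rewrite !mem_cat => /or3P[wS|/quU wU|wW]; by rewrite inE ?wS ?wU ?wW ?orbT.
have UB : {subset U <= B} by move=> w wU; rewrite inE wU orbT.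
move=> x; case: (boolP (x \in S)) => [xS _|xS].
  have [S1 [S2 ES]] := split_mem xS.
  have EM : S ++ qu ++ W = S1 ++ (x :: S2 ++ qu ++ W) by rewrite ES -catA.
  exists (rev (x :: S2 ++ qu ++ W)); split.
  - by apply/(upath_in_rev esym)/(upath_in_infix _ MB); rewrite EM suffix_infix.
  - by rewrite head_rev esym; move: eMc; rewrite EM last_cat.
  - by rewrite last_rev.
  - rewrite size_rev /= !size_cat; clear -dqu; lia.
have [s0 [S' ES]] : exists s0 S', S = s0 :: S' by case: (S) Sn => // s0 S' _; exists s0, S'.
rewrite /B inE (negbTE xS) /= => /orP[xU|xW].
  have xr : x != last c S by apply: contraNneq xS => ->; rewrite ES /= mem_last.
  have [[|r' qx] [qxU /= r'E /= lqx dqx]] := lpU x xU xr; first by [].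
  have lS : last s0 S' = r' by rewrite r'E ES.
  exists (s0 :: S' ++ qx); split=> //.
  - apply: upath_in_cat; first by apply: upath_in_infix MB; rewrite -ES prefix_infix.
    + apply/(upath_in_sub UB)/(upath_in_infix (suffix_infix [:: r'] qx) qxU).
    + by rewrite lS; case: qxU.
    + apply/hasPn=> w wqx; apply/negP; rewrite -ES => wS.
      case: qxU => _ /= /andP[r'qx _] qxU.
      have wU : w \in U by apply: qxU; rewrite inE wqx orbT.
      by move: r'qx; rewrite r'E -(SU w wS wU) wqx.
  - by move: ecS; rewrite ES.
  - by rewrite /= last_cat lS.
  - by rewrite /= size_cat; clear -dqx; lia.
have [W1 [W2 EW]] := split_mem xW.
exists (s0 :: S' ++ qu ++ rcons W1 x); split=> //.
- apply: upath_in_infix MB; rewrite EW ES -cat_rcons !catA.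
  exact: prefix_infix.
- by move: ecS; rewrite ES.
- by rewrite /= !last_cat last_rcons.
- by rewrite /= !size_cat size_rcons; clear -dqu; lia.
Qed.

Definition stick a d (S : seq T) (U : {pred T}) :=
  [/\ S != [::], upath_in H S, e a (head a S), {subset U <= H} &
   [/\ last a S \in U, {in S, forall x, x \in U -> x = last a S},
       (exists2 x, x \in U & x != last a S) &
       {in U, forall x, x != last a S -> exists q,
          [/\ upath_in U q, head x q = last a S, last x q = x & d < size q]}]].

Lemma stick_bridge a d S U : stick a d S U -> exists (qu W : seq T) g,
  [/\ upath_in H (S ++ qu ++ W), {subset qu <= U}, d < (size qu).+1,
      e (last a (S ++ qu ++ W)) g & (g \in C) || (g \in S) && (g != last a S)].
Proof.
case=> Sn SH eaS UH [rU SU [x0 x0U x0r] lpU]; set r := last a S in rU SU x0r lpU *.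
case: tc => _ _ cTv; have [c cC _] := other_in_C r.
have XY z : (z \in U) && (z != r) -> ~~ ((z \in C) || (z \in S) && (z != r)).
  case/andP=> zU zr; rewrite negb_or (comp_off_notC vC (UH _ zU)) /= negb_and.
  by apply/orP; case: (boolP (z \in S)) => zS; [right; rewrite (SU z zS zU) eqxx | left].
have x0S : x0 \in setT :\ r by rewrite !inE x0r.
have cS : c \in setT :\ r.
  by rewrite !inE andbT; apply: contraTneq cC => ->; exact: (@comp_off_notC C v vC r (UH _ rU)).
have [u [W [g [/= /andP[uU ur] /= Yg WXY [uWs uWu uWS]]]]] :=
  @connected_in_bridge _ [pred z | (z \in U) && (z != r)]
    [pred z | (z \in C) || (z \in S) && (z != r)] x0 c (cTv r) XY x0S
    (introT andP (conj x0U x0r)) cS (introT orP (or_introl cC)).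
move: uWs => /= /[!rcons_path] /andP[uW eWg].
have WUCS w : w \in W -> [/\ w \notin U, w \notin C & w \notin S].
  move=> wW; have wr : w != r.
    by have := uWS w; rewrite !inE mem_rcons inE wW !orbT andbT; apply.
  move/allP/(_ w wW): WXY => /= /andP[]; rewrite wr !andbT negb_or.
  by move=> wU /andP[wC wS].
have [[|r' qu] [qU /= r'E lq dq]] := lpU u uU ur; first by [].
subst r'; exists qu, W, g; case: (qU) => _ /= /andP[rqu _] rquU.
have quU : {subset qu <= U} by move=> w wqu; apply: rquU; rewrite inE wqu orbT.
have [s0 [S' ES]] : exists s0 S', S = s0 :: S' by case: (S) Sn => // s0 S' _; exists s0, S'.
have lS : last s0 S' = r by rewrite /r ES.
have SquH : upath_in H (s0 :: S' ++ qu).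
  apply: upath_in_cat; first by rewrite -ES.
  - exact/(upath_in_sub UH)/(upath_in_infix (suffix_infix [:: r] qu) qU).
  - by rewrite lS; case: qU.
  - apply/hasPn=> w wqu; apply/negP; rewrite -ES => wS.
    by move: rqu; rewrite -(SU w wS (quU w wqu)) wqu.
have uWu' : uniq W by move: uWu; rewrite /= rcons_uniq => /and3P[].
have WC : all [pred z | z \notin C] W by apply/allP=> w /WUCS[].
have WH := path_in_comp_off vC (UH _ uU) uW WC.
split=> //.
- rewrite ES catA; apply: upath_in_cat SquH _ _ _.
  + by split=> //; exact: path_sorted uW.
  + by rewrite last_cat lS lq.
  + apply/hasPn=> w /WUCS[wU _ wS].
    have : w \notin s0 :: S' ++ qu by rewrite -cat_cons mem_cat -ES negb_or wS (contra (quU w)).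
    exact.
- by rewrite !last_cat -/r lq.
Qed.

Lemma stick_shorten a d S1 g S2 U (qu W : seq T) (S := S1 ++ g :: S2) :
  stick a d S U -> upath_in H (S ++ qu ++ W) -> {subset qu <= U} ->
  d < (size qu).+1 -> e (last a (S ++ qu ++ W)) g -> g != last a S ->
  stick a d (rcons S1 g) [pred z | (z == g) || [|| z \in S2, z \in U | z \in W]].
Proof.
case=> Sn SH eaS UH [rU SU _ lpU] [Ms Mu MH] quU dqu eMg gr.
have S2n : S2 != [::] by move: gr; rewrite /S last_cat /=; case: (S2) => //=; rewrite eqxx.
have lS2 : last g S2 = last a S by rewrite /S last_cat.
have EM : S ++ qu ++ W = rcons S1 g ++ (S2 ++ qu ++ W) by rewrite /S -cat_rcons -catA.
have [S1u gM Mu'] : [/\ uniq (rcons S1 g), g \notin S2 ++ qu ++ W & uniq (S2 ++ qu ++ W)].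
  move: Mu; rewrite EM cat_uniq has_sym => /and3P[-> /hasPn/(_ g)].
  by rewrite mem_rcons mem_head => /(_ isT) -> ->.
set B := [pred z | [|| z \in S2, z \in U | z \in W]].
have lpB : long_paths g d B.
  apply: (long_paths_blob (qu := qu)) => //.
  - by move: Ms; rewrite EM => /cat_sorted2[].
  - case: SH => Ss _ _; move: (infix_sorted (suffix_infix S1 (g :: S2)) Ss) => /=.
    by case: (S2) S2n => //= x S2' _ /andP[].
  - by move: eMg; rewrite EM last_cat last_rcons.
  - by move=> x xS2; rewrite lS2; apply: SU; rewrite /S mem_cat inE xS2 !orbT.
  - by rewrite lS2.
have gB : g \notin B.
  rewrite /B inE negb_or; move: gM; rewrite !mem_cat !negb_or => /and3P[-> _ ->].
  rewrite andbT /=; apply: contra gr => gU.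
  by have := SU g; rewrite /S mem_cat mem_head orbT => /(_ isT gU) /eqP.
have ES : S = rcons S1 g ++ S2 by rewrite cat_rcons.
have rS2 : last a S \in S2 by rewrite -lS2; case: (S2) S2n => //= x S2' _; exact: mem_last.
split.
- by case: (S1).
- by apply: upath_in_infix (And3 Ms Mu MH); rewrite EM prefix_infix.
- by move: eaS; rewrite ES; case: (S1).
- move=> w; rewrite inE => /orP[/eqP->|]; first by apply: MH; rewrite EM mem_cat mem_rcons mem_head.
  case/or3P=> [wS2|/UH //|wW]; apply: MH; rewrite EM mem_cat !mem_cat ?wS2 ?wW ?orbT //.
split.
- by rewrite last_rcons inE eqxx.
- move=> x; rewrite last_rcons mem_rcons inE => /orP[/eqP //|xS1].
  rewrite inE => /orP[/eqP //|xB]; exfalso.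
  have xM : x \notin S2 ++ qu ++ W.
    move: Mu; rewrite EM cat_uniq has_sym => /and3P[_ /hasPn/(_ x) + _].
    by rewrite mem_rcons inE xS1 orbT; apply.
  move: xM; rewrite !mem_cat !negb_or => /and3P[xS2 _ xW].
  move: xB; rewrite /B /= (negbTE xS2) (negbTE xW) orbF /= => xU.
  have := SU x; rewrite ES mem_cat mem_rcons inE xS1 orbT => /(_ isT xU) xr.
  by move: xS2; rewrite xr -ES rS2.
- exists (last a S); first by rewrite inE rU !orbT.
  by rewrite last_rcons eq_sym.
- move=> x; rewrite last_rcons inE => /orP[/eqP -> |xB]; first by rewrite eqxx.
  move=> xg; have [q [qB egq lq dq]] := lpB x xB.
  exists (g :: q); split=> //.
  + case: qB => qs qu' qB; split=> //=.
    * by case: (q) dq egq qs => //= y q' _ -> ->.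
    * by rewrite qu' andbT; apply: contra gB => /qB.
    * move=> w; rewrite inE => /orP[/eqP->|/qB wB]; first by rewrite inE eqxx.
      by move: wB; rewrite /B inE /= => wB; apply/orP; right.
  + by rewrite /= ltnS ltnW.
Qed.

Lemma ear_of_stick a d S U : a \in C -> stick a d S U ->
  exists b q, ear a b q /\ d < size q.
Proof.
move=> aC; move: {2}(size S) (leqnn (size S)) => n.
elim: n S U => [|n IH] S U Sn st.
  by case: st; move: Sn; rewrite leqn0 size_eq0 => /eqP->.
have [qu [W [g [MH quU dqu eMg gCS]]]] := stick_bridge st.
have [S0 SH eaS UH [rU SU _ lpU]] := st.
have [Ms Mu MHs] := MH.
case/orP: gCS => [gC | /andP[gS gr]].
  case: (eqVneq g a) => [ga | ga].
    subst g; apply: (ear_of_long_paths (U := [pred z | [|| z \in S, z \in U | z \in W]]) aC).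
    - move=> w /or3P[wS|/UH //|wW]; apply: MHs; by rewrite !mem_cat ?wS ?wW ?orbT.
    - by exists (last a S); rewrite inE rU orbT.
    - exact: (long_paths_blob (qu := qu)).
  exists g, (S ++ qu ++ W); split; last by rewrite !size_cat; case: (S) S0 => //= *; clear -dqu; lia.
  split=> //; first by rewrite eq_sym.
  - by case: (S) S0.
  - by split=> //; case: (S) S0 eaS.
have [S1 [S2 ES]] := split_mem gS; subst S.
have S2n : S2 != [::] by move: gr; rewrite last_cat /=; case: (S2) => //=; rewrite eqxx.
apply: (IH (rcons S1 g) _ _ (stick_shorten st MH quU dqu eMg gr)).
have S2p : 0 < size S2 by rewrite lt0n size_eq0.
by move: Sn S2p; rewrite size_rcons size_cat /=; clear; lia.
Qed.

Lemma ear_of_path a u p : a \in C -> e a u -> upath_in H (u :: p) ->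
  exists b q, ear a b q /\ count (e (last u p)) (u :: p) < size q.
Proof.
move=> aC eau up; set y := last u p; set d := count (e y) (u :: p).
case: (boolP (e y a)) => [eya|nya].
  have [_ _ pH] := up.
  apply: (ear_of_long_paths (U := mem (u :: p)) aC pH); first by exists u; rewrite mem_head.
  move=> x xp; have [L [R E]] := split_mem xp.
  have up' : upath_in (mem (u :: p)) (L ++ x :: R) by rewrite -E; case: up => ? ? _; split.
  have yR : y = last x R by rewrite /y -(last_cons u) E last_cat.
  have [q [qU hq lq dq]] := rotation_path esym eirr up'.
  have qn : q != [::] by case: (q) dq.
  exists q; split=> //.
  - rewrite (head_def a x qn) hq; case: ifP => [|_]; last by rewrite -yR esym.
    by case: (L) E => //= w L' [<-].
  - by rewrite (last_def a x qn).
  - by rewrite /d E yR.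
have hy : has (e y) (u :: p).
  apply: path_last_neighbour => //; last by case: up.
  by apply: contraNneq nya => p0; rewrite /y p0 /= esym.
have [P0 [r [Rest [E eyr nP0]]]] := split_first hy.
have yR : y = last r Rest by rewrite /y -(last_cons u) E last_cat.
have dE : d = count (e y) (r :: Rest).
  by rewrite /d E count_cat (eqP (_ : count (e y) P0 == 0)) // eqn0Ngt -has_count.
have uE : upath_in H (rcons P0 r ++ Rest) by rewrite cat_rcons -E.
have Ru : ~~ has (mem (rcons P0 r)) Rest by case: uE => _; rewrite cat_uniq => /and3P[].
apply: (ear_of_stick aC (S := rcons P0 r) (U := mem (r :: Rest))); split.
- by case: (P0).
- exact: upath_in_infix (prefix_infix _ _) uE.
- by case: (P0) E => [|w P0'] [<-].
- move=> w; rewrite inE => /orP[/eqP->|wR]; case: uE => _ _; apply;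
    by rewrite mem_cat mem_rcons ?mem_head // wR orbT.
rewrite last_rcons; split.
- exact: mem_head.
- move=> x xP; rewrite inE => /orP[/eqP //|xR].
  by case/hasP: Ru; exists x.
- exists y; first by rewrite yR mem_last.
  by apply: contraTneq eyr => ->; rewrite eirr.
move=> x; rewrite inE => /orP[/eqP -> |xR]; first by rewrite eqxx.
move=> _; have [R1 [R2 ER]] := split_mem xR.
have uR : upath_in (mem (r :: Rest)) ((r :: R1) ++ x :: R2).
  have : upath_in H (r :: Rest) by apply: upath_in_infix uE; rewrite cat_rcons suffix_infix.
  by rewrite ER => -[? ? _]; split=> // w; rewrite ER.
have yR2 : last x R2 = y by rewrite yR ER last_cat.
have [q [qU hq lq dq]] := rotation_path esym eirr uR.
exists q; split=> //.
- by rewrite hq yR2 /= eyr.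
- by rewrite dE -yR2 ER.
Qed.

Lemma exists_long_ear :
  exists a b q z, [/\ ear a b q, z \in H & #|[set x in H | e z x]| < size q].
Proof.
have [u uH [a aC eua]] := exists_attachment.
have [p [up pmax]] := maximal_path uH.
have [b [q [abq dq]]] := ear_of_path aC (etrans (esym a u) eua) up.
exists a, b, q, (last u p); split=> //; first by case: up => _ _; apply; rewrite mem_last.
apply: leq_ltn_trans dq; rewrite -size_filter; apply: leq_trans (card_size _).
apply/subset_leq_card/subsetP => x; rewrite inE => /andP[xH eyx].
by rewrite mem_filter eyx pmax.
Qed.

End Ears.

Section Swaps.
Variables (C : seq T) (v : T).
Hypotheses (Ccb : cummerbund e C) (vC : v \notin C).

Local Notation H := (comp_off C v).

Definition attachments : {set T} := [set a in C | [exists u in H, e a u]].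

Definition detour al X be Y P := [/\ is_rot C (al :: X ++ be :: Y), P != [::],
  upath_in H P, e al (head al P) & e (last al P) be].

Lemma detour_cycle al X be Y P : detour al X be Y P -> is_cycle e (al :: P ++ be :: Y).
Proof.
case=> rC Pn [Ps Pu PH] eh el; have [[C3 Cu Cc] _] := Ccb.
have pe := is_rot_perm rC.
have inC w : w \in al :: be :: Y -> w \in C.
  by rewrite -(perm_mem pe) !inE mem_cat inE => /or3P[] ->; rewrite ?orbT.
have PC w : w \in P -> w \notin C by move/PH/(comp_off_notC vC).
split.
- by case: (P) Pn => // p0 P' _; rewrite /= size_cat /= !addnS.
- have u1 : uniq (al :: be :: Y).
    apply: subseq_uniq (_ : subseq _ (al :: X ++ be :: Y)) _; last by rewrite (perm_uniq pe).
    by rewrite /= eqxx suffix_subseq.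
  rewrite -[al :: _]cat1s uniq_catCA cat1s cat_uniq Pu u1 andbT.
  by apply/hasPn => w /inC; apply: contraL; exact: PC.
- move: (is_rot_cycle e rC); rewrite Cc /cycle /= rcons_cat rcons_cons cat_path /= => /andP[_ /andP[ebe pY]].
  rewrite rcons_cat rcons_cons cat_path /=.
  by case: P Pn Ps eh el {PH Pu PC} => [//|p0 P] _ /= -> -> ->.
Qed.

Lemma detour_size al X be Y P : detour al X be Y P -> size P <= size X.
Proof.
move=> dt; have := Ccb.2 _ (detour_cycle dt); case: dt => rC _ _ _ _.
rewrite -(perm_size (is_rot_perm rC)) /= !size_cat /=.
by clear; lia.
Qed.

Definition no_swap := forall al X be Y P, detour al X be Y P ->
  ~~ has [in attachments] X -> size P != size X.

Lemma arc_size_ge n X al be Y P : no_swap -> size X <= n -> detour al X be Y P ->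
  size P + 3 * count [in attachments] X + 1 <= size X.
Proof.
move=> NS; elim: n X al be Y P => [|n IH] X al be Y P Xn dt.
  have := detour_size dt; case: dt => _ Pn _ _ _.
  by move: Xn; rewrite leqn0 => /eqP ->; case: (P) Pn.
have PX : size P <= size X := detour_size dt.
case: (boolP (has [in attachments] X)) => [hX|nhX]; last first.
  have := NS _ _ _ _ _ dt nhX; rewrite (eqP (_ : count _ X == 0)); last by rewrite eqn0Ngt -has_count.
  by move: PX; clear; lia.
have [X1 [g [X2 [EX gA nh1]]]] := split_first hX.
move: (gA); rewrite inE => /andP[gC /existsP[ug /andP[ugH egu]]].
case: dt => rC Pn PH eh el.
have [P1 [P2 [P1H P2H hP1 lP2 [P1n P2n lP1 hP2 sP]]]] :=
  upath_in_via (connected_in_comp_off vC) Pn PH ugH.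
have dt1 : detour al X1 g (X2 ++ be :: Y) P1.
  split=> //; first by move: rC; rewrite EX -catA.
  - by rewrite (head_def al ug P1n) hP1 -(head_def al ug Pn).
  - by rewrite (last_def al ug P1n) lP1 esym.
have dt2 : detour g X2 be (Y ++ al :: X1) P2.
  split=> //.
  - have := is_rot_cat (C := C) (s1 := al :: X1) (s2 := g :: X2 ++ be :: Y).
    by rewrite /= -!catA /=; apply; move: rC; rewrite EX -catA.
  - by rewrite (head_def g ug P2n) hP2.
  - by rewrite (last_def g ug P2n) lP2 -(last_def al ug Pn).
have s1 := detour_size dt1; have n1 := NS _ _ _ _ _ dt1 nh1.
have s2 := IH X2 g be _ P2 (_ : size X2 <= n) dt2.
have c1 : count [in attachments] X1 = 0 by apply/eqP; rewrite eqn0Ngt -has_count.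
rewrite EX count_cat /= gA c1 size_cat /=.
move: Xn s1 n1 s2 sP; rewrite EX size_cat /=.
move: (size P) (size P1) (size P2) (size X1) (size X2) (count _ X2) => p p1 p2 x1 x2 c2.
move=> Xn s1 n1 s2 sP; have {}n1 : p1 < x1 by rewrite ltn_neqAle n1 s1.
have {}s2 : p2 + 3 * c2 + 1 <= x2 by apply: s2; clear -Xn; lia.
by clear -n1 s2 sP; lia.
Qed.

Lemma count_attachments : count [in attachments] C = #|attachments|.
Proof.
have [[_ Cu _] _] := Ccb; rewrite -size_filter.
move/card_uniqP: (filter_uniq [in attachments] Cu) => <-.
by apply: eq_card => x; rewrite mem_filter inE andbC; case: (boolP (x \in C)).
Qed.

Lemma degree_le_attachments z : z \in H ->
  degree e z <= #|[set x in H | e z x]| + #|attachments|.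
Proof.
move=> zH; apply: leq_trans (leq_card_setU _ _); apply/subset_leq_card/subsetP => u.
rewrite in_set => ezu; apply/setUP; case: (boolP (u \in C)) => uC; [right|left].
  by rewrite /attachments in_set uC; apply/existsP; exists z; rewrite zH esym.
by rewrite in_set (comp_off_closed vC zH ezu uC) ezu.
Qed.

Lemma exists_swap : (forall w, #|T| <= 3 * degree e w) ->
  exists al X be Y P, [/\ detour al X be Y P, ~~ has [in attachments] X & size P = size X].
Proof.
move=> deg; apply: NNPP => nsw.
have NS : no_swap.
  by move=> al X be Y P dt nh; apply/eqP => sPX; apply: nsw; exists al, X, be, Y, P.
have [[C3 Cu _] _] := Ccb.
have C2 : 1 < #|C| by rewrite (card_uniqP Cu); apply: ltnW.
have [a [b [q [z [[aC bC ab qn [qH eaq eqb]] zH zN]]]]] := exists_long_ear vC C2.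
have [i s' Ei] := rot_to aC.
have bs' : b \in s' by move: bC; rewrite -(mem_rot i) Ei inE eq_sym (negbTE ab).
have [Y [Z Es']] := split_mem bs'.
have rC1 : is_rot C (a :: Y ++ b :: Z) by exists i; rewrite Ei Es'.
have rC2 : is_rot C (b :: Z ++ a :: Y) := @is_rot_cat _ C (a :: Y) (b :: Z) rC1.
have sY := arc_size_ge NS (leqnn _) (And5 rC1 qn qH eaq eqb).
have sZ : size q + 3 * count [in attachments] Z + 1 <= size Z.
  rewrite -(size_rev q); apply: (arc_size_ge (al := b) (be := a) (Y := Y) NS (leqnn _)).
  split=> //.
  - by case/lastP: (q) qn => // q' x _; rewrite rev_rcons.
  - exact: upath_in_rev.
  - by rewrite head_rev (last_def b a qn) esym.
  - by rewrite last_rev (head_def b a qn) esym.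
have qHq : {subset q <= H} by case: qH.
have aA : a \in attachments.
  rewrite /attachments in_set aC; apply/existsP; exists (head a q); rewrite eaq andbT.
  by apply: qHq; case: (q) qn => // ? ? _; exact: mem_head.
have bA : b \in attachments.
  rewrite /attachments in_set bC; apply/existsP; exists (last a q); rewrite esym eqb andbT.
  by apply: qHq; case: (q) qn => //= ? ? _; exact: mem_last.
have cnt := count_attachments; rewrite -(permP (is_rot_perm rC1)) /= aA count_cat /= bA in cnt.
have szC := perm_size (is_rot_perm rC1); rewrite /= size_cat /= in szC.
have dg := degree_le_attachments zH.
have tot : size C + size q <= #|T|.
  rewrite -size_cat -(card_uniqP _); first exact: max_card.
  rewrite cat_uniq Cu; case: qH => _ -> _; rewrite andbT.
  by apply/hasP => -[w /qHq /(comp_off_notC vC) /negP].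
move: (deg z) sY sZ cnt szC dg tot zN.
move: (size q) (size Y) (size Z) (size C) (count _ Y) (count _ Z) (#|attachments|) => ?????? ?.
by move: (degree e z) (#|T|) (#|[set x in H | e z x]|) => ???; clear; lia.
Qed.

Lemma detour_comp_proper al X be Y P : detour al X be Y P ->
  ~~ has [in attachments] X -> v \notin P ->
  v \notin al :: P ++ be :: Y /\ #|comp_off (al :: P ++ be :: Y) v| < #|H|.
Proof.
case=> rC Pn [_ _ PH] _ _ nh vP; set C' := al :: P ++ be :: Y.
have pe := is_rot_perm rC.
have notC' w : w \in C -> w \notin C' -> w \in X.
  rewrite -(perm_mem pe) /C' !inE !mem_cat !inE !negb_or.
  by case/or3P=> [->|->|/orP[->|->]]; rewrite ?andbF.
have vC' : v \notin C'.
  apply: contra vC; rewrite -(perm_mem pe) /C' !in_cons !mem_cat !in_cons (negbTE vP) /=.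
  by case/orP=> [->|/orP[->|->]]; rewrite ?orbT.
split=> //.
have key p w : w \in H -> w \notin P -> path (restr [pred z | z \notin C']) w p ->
    (last w p \in H) && (last w p \notin P).
  elim: p w => [|u p IH] w wH wP /=; first by rewrite wH wP.
  case/andP=> /and3P[ewu _ uC'] pu; apply: IH pu; last first.
    by apply: contra uC'; rewrite /C' inE mem_cat => ->; rewrite orbT.
  apply: (comp_off_closed vC wH ewu); apply/negP => uC.
  case/hasP: nh; exists u; first exact: notC'.
  by rewrite /attachments in_set uC; apply/existsP; exists w; rewrite wH esym.
have sub x : x \in comp_off C' v -> (x \in H) && (x \notin P).
  by rewrite inE => /connectP[p pp ->]; exact: key (comp_off_v C v) vP pp.
apply: proper_card; apply/properP; split; first by apply/subsetP => x /sub /andP[].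
have hP : head v P \in P by case: (P) Pn => // ? ? _; exact: mem_head.
by exists (head v P); [exact: PH | apply/negP => /sub; rewrite hP andbF].
Qed.

End Swaps.

Hypothesis deg : forall w, #|T| <= 3 * degree e w.

Lemma cummerbund_through v n C : cummerbund e C -> v \notin C ->
  #|comp_off C v| <= n -> exists c, cummerbund e c /\ v \in c.
Proof.
elim: n C => [|n IH] C Ccb vC Hn.
  by move: Hn; rewrite leqn0 => /eqP /cards0_eq E; move: (comp_off_v C v); rewrite E inE.
have [al [X [be [Y [P [dt nh sPX]]]]]] := exists_swap Ccb vC deg.
have C'cb : cummerbund e (al :: P ++ be :: Y).
  split; first exact: detour_cycle dt.
  move=> d /(Ccb.2); case: dt => rC _ _ _ _.
  by rewrite -(perm_size (is_rot_perm rC)) /= !size_cat /= sPX.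
case: (boolP (v \in P)) => vP.
  by exists (al :: P ++ be :: Y); rewrite inE mem_cat vP orbT.
have [vC' lt] := detour_comp_proper vC dt nh vP.
by apply: IH C'cb vC' _; rewrite -ltnS (leq_trans lt Hn).
Qed.

End Graphs.

Theorem theorem3 (T : finType) (e : rel T) :
  simple_graph e ->
  two_connected e ->
  (forall v : T, #|T| <= 3 * degree e v) ->
  cummerbund_covered e.
Proof.
move=> [esym eirr] tc deg v.
have [C Ccb] := exists_cummerbund eirr tc.
case: (boolP (v \in C)) => vC; first by exists C.
exact: (cummerbund_through esym eirr tc deg Ccb vC (leqnn _)).
Qed.
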